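(* Let $\mathcal{H}$ and $\mathcal{K}$ be real or complex Hilbert spaces and let $U:\mathcal{H}\to\mathcal{K}$ be a (not necessarily everywhere defined) linear operator. The following are equivalent: (i) $U$ is a unitary operator; (ii) $\ker U=\{0\}$, every non-zero real number $t$ is in the resolvent set of $M_{U,U^{-1}}$, and $\|R_{U,U^{-1}}(t)\|\le 1/|t|$ for all real $t\neq 0$.
   Context: When $\ker U=\{0\}$, $U^{-1}:\mathcal{K}\to\mathcal{H}$ is the inverse operator with domain $\operatorname{ran} U$. $M_{U,U^{-1}}$ is the operator on $\mathcal{H}\times\mathcal{K}$ with domain $\operatorname{dom} U\times\operatorname{ran} U$ defined by $M_{U,U^{-1}}(h,k)=(-U^{-1}k,Uh)$. A scalar $\lambda$ is in its resolvent set if $M_{U,U^{-1}}-\lambda I$ is injective with everywhere defined bounded inverse on $\mathcal{H}\times\mathcal{K}$, and then $R_{U,U^{-1}}(\lambda):=(M_{U,U^{-1}}-\lambda I)^{-1}$. A unitary operator is an everywhere defined bounded bijection $U:\mathcal{H}\to\mathcal{K}$ with $U^*=U^{-1}$. *)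

From HB Require Import structures.
From mathcomp Require Import all_boot all_order all_algebra.
From mathcomp Require Import complex.
From mathcomp Require Import reals.

Set Implicit Arguments.
Unset Strict Implicit.
Unset Printing Implicit Defensive.

Import Order.TTheory GRing.Theory Num.Theory.
Local Open Scope ring_scope.

Definition scal (R : realType) (b : bool) : numFieldType :=
  if b then (R[i] : numFieldType) else (R : numFieldType).

Definition sconj (R : realType) (b : bool) : scal R b -> scal R b :=
  match b return scal R b -> scal R b with
  | true => fun z : R[i] => (z^*)%C
  | false => fun x : R => x
  end.

Definition is_hilbert (K : numFieldType) (cj : K -> K) (V : lmodType K)
    (ip : V -> V -> K) : Prop :=
  [/\ (forall (a : K) (x y z : V), ip (a *: x + y) z = a * ip x z + ip y z),
      (forall x y : V, ip x y = cj (ip y x)),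
      (forall x : V, 0 <= ip x x),
      (forall x : V, ip x x = 0 -> x = 0)
    & (forall u : nat -> V,
         (forall e : K, 0 < e -> exists N : nat, forall m n : nat,
             (N <= m)%N -> (N <= n)%N -> ip (u m - u n) (u m - u n) < e) ->
         exists x : V, forall e : K, 0 < e -> exists N : nat, forall n : nat,
             (N <= n)%N -> ip (u n - x) (u n - x) < e)].

Section Ops.
Variables (K : numFieldType) (H G : lmodType K).
Variables (ipH : H -> H -> K) (ipG : G -> G -> K).

Definition ip_prod (v w : H * G) : K := ipH v.1 w.1 + ipG v.2 w.2.

Definition subspace (D : H -> Prop) : Prop :=
  D 0 /\ forall (a : K) x y, D x -> D y -> D (a *: x + y).

(* U : H -> G is a linear operator with domain D (values off D irrelevant). *)
Definition linear_on (D : H -> Prop) (U : H -> G) : Prop :=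
  subspace D /\ forall (a : K) x y, D x -> D y -> U (a *: x + y) = a *: U x + U y.

Definition bounded_linear (T : H -> G) : Prop :=
  (forall (a : K) x y, T (a *: x + y) = a *: T x + T y) /\
  exists C : K, forall x, ipG (T x) (T x) <= C * ipH x x.

Definition is_adjoint (T : H -> G) (V : G -> H) : Prop :=
  forall h k, ipG (T h) k = ipH h (V k).

Definition unitary (D : H -> Prop) (U : H -> G) : Prop :=
  (forall h, D h) /\ bounded_linear U /\
  exists V : G -> H, [/\ cancel U V, cancel V U & is_adjoint U V].

Definition trivial_kernel (D : H -> Prop) (U : H -> G) : Prop :=
  forall h, D h -> U h = 0 -> h = 0.

(* Graph of M_{U,U^{-1}} on H x G: domain dom U x ran U,
   M (h, k) = (- U^{-1} k, U h), where U^{-1} k = g for k = U g, g in dom U. *)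
Definition M_graph (D : H -> Prop) (U : H -> G) (w z : H * G) : Prop :=
  D w.1 /\ exists g, [/\ D g, w.2 = U g & z = (- g, U w.1)].

End Ops.

Section Res.
Variables (K : numFieldType) (H G : lmodType K).
Variables (ipH : H -> H -> K) (ipG : G -> G -> K).

(* R is the resolvent (M_{U,U^{-1}} - lam I)^{-1}: R is an everywhere defined
   bounded linear operator on H x G whose graph is the inverse of the graph
   of M_{U,U^{-1}} - lam I (so M - lam I is injective, and its inverse is
   everywhere defined and equal to R). *)
Definition is_resolvent (D : H -> Prop) (U : H -> G) (lam : K)
    (R : H * G -> H * G) : Prop :=
  @bounded_linear K (H * G)%type (H * G)%type
     (ip_prod ipH ipG) (ip_prod ipH ipG) R /\
  forall w v : H * G,
    (exists z, M_graph D U w z /\ v = (z.1 - lam *: w.1, z.2 - lam *: w.2))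
    <-> w = R v.

Definition in_resolvent (D : H -> Prop) (U : H -> G) (lam : K) : Prop :=
  exists R, is_resolvent D U lam R.

End Res.

From HB Require Import structures.
From mathcomp Require Import all_boot all_order all_algebra.
From mathcomp Require Import complex reals ring.
From mathcomp Require boolp.
Import Order.TTheory GRing.Theory Num.Theory.
Local Open Scope ring_scope.
Set Implicit Arguments.
Unset Strict Implicit.
Unset Printing Implicit Defensive.

(* For w = (h, U g) in the domain of M = M_{U,U^-1} one has M w = (-g, U h).
   If U is unitary, M is everywhere defined, skew-adjoint and M^2 = -1, so
   ||(M - t) w||^2 = (1 + t^2) ||w||^2 and R(t) = -(M + t)/(1 + t^2).
   Conversely, surjectivity of M - t forces dom U = H and ran U = K, and the
   bound on R(t) at w = (x, U x) says that
   t |-> ||x||^2 + ||U x||^2 + 2t (||x||^2 - ||U x||^2) is nonnegative for all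
   real t <> 0; hence U is isometric, and unitary by polarization. *)

Lemma double_inj (K : numDomainType) (x y : K) : x + x = y + y -> x = y.
Proof. by rewrite -!mulr2n => /(pmulrnI (isT : (0 < 2)%N)). Qed.

Lemma real_1Dsqr_gt0 (K : numDomainType) (t : K) : t \is Num.real -> 0 < 1 + t ^+ 2.
Proof. by move=> t_real; rewrite (lt_le_trans ltr01) // lerDl -realEsqr. Qed.

Lemma affine_ge0_slope_eq0 (K : numFieldType) (A B : K) :
  A \is Num.real -> B \is Num.real ->
  (forall t, t \is Num.real -> t != 0 -> 0 <= A + t * B) -> B = 0.
Proof.
move=> A_real B_real affine_ge0; apply/eqP/negPn/negP => B_neq0.
have normA1_gt0 : 0 < `|A| + 1 by rewrite ltr_wpDl.
pose t := - (`|A| + 1) / B.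
have t_real : t \is Num.real by rewrite rpredM ?rpredV // rpredN gtr0_real.
have t_neq0 : t != 0 by rewrite mulf_neq0 ?invr_eq0 // oppr_eq0 gt_eqF.
have := affine_ge0 t t_real t_neq0; rewrite divfK // subr_ge0.
by move=> /le_trans/(_ (real_ler_norm A_real)); rewrite gerDl ler10.
Qed.

Lemma linear_inverse (K : pzRingType) (V W : lmodType K) (f : V -> W) (g : W -> V) :
  linear f -> cancel f g -> cancel g f -> linear g.
Proof. by move=> f_lin fK gK a x y; apply: (can_inj fK); rewrite f_lin !gK. Qed.

Section ComplexStructure.
Variables (K : numFieldType) (W : lmodType K) (J : {linear W -> W}).
Hypothesis JJ : forall w, J (J w) = - w.

Lemma cs_shift_mul s w :
  J (J w + s *: w) - s *: (J w + s *: w) = - ((1 + s ^+ 2) *: w).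
Proof.
rewrite linearD linearZ /= JJ scalerDr scalerA -expr2 opprD addrA addrK.
by rewrite scalerDl scale1r opprD.
Qed.

(* By [cs_shift_mul], (J - t)^-1 = -(J + t)/(1 + t^2) for real t. *)
Definition cs_resolvent (t : K) (v : W) : W := - (1 + t ^+ 2)^-1 *: (J v + t *: v).

Lemma cs_resolvent_linear t : linear (cs_resolvent t).
Proof.
move=> a x y; rewrite /cs_resolvent.
have -> : J (a *: x + y) + t *: (a *: x + y) = a *: (J x + t *: x) + (J y + t *: y).
  by rewrite linearP !scalerDr [t *: (a *: x)]scalerA mulrC -scalerA addrACA.
by rewrite scalerDr !scalerA mulrC.
Qed.

Section RealShift.
Variable t : K.
Hypothesis t_real : t \is Num.real.

Let c_neq0 : 1 + t ^+ 2 != 0. Proof. by rewrite gt_eqF ?real_1Dsqr_gt0. Qed.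

Lemma cs_resolventK : cancel (fun w => J w - t *: w) (cs_resolvent t).
Proof.
move=> w; rewrite /cs_resolvent -scaleNr.
have -> : t *: (J w + (- t) *: w) = - ((- t) *: (J w + (- t) *: w)).
  by rewrite (scaleNr t (J w + _)) opprK.
by rewrite cs_shift_mul sqrrN scalerN scaleNr opprK scalerA mulVf ?scale1r.
Qed.

Lemma cs_resolventKV : cancel (cs_resolvent t) (fun w => J w - t *: w).
Proof.
move=> v; rewrite /cs_resolvent linearZ /= scalerA mulrC -scalerA -scalerBr cs_shift_mul.
by rewrite scalerN scaleNr opprK scalerA mulVf ?scale1r.
Qed.

End RealShift.
End ComplexStructure.

Section Conjugation.
Variables (K : numFieldType) (cj : K -> K).
Hypothesis cjD : {morph cj : x y / x + y}.
Hypothesis cjM : {morph cj : x y / x * y}.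
Hypothesis cj_real : forall x, x \is Num.real -> cj x = x.
(* [a * p + cj (a * p)] is twice the real part of [a * p]. *)
Hypothesis cj_sep : forall p q : K,
  (forall a, a * p + cj (a * p) = a * q + cj (a * q)) -> p = q.

Definition hermitian (V : lmodType K) (ip : V -> V -> K) : Prop :=
  (forall a x y z, ip (a *: x + y) z = a * ip x z + ip y z) /\
  (forall x y, ip x y = cj (ip y x)).

Lemma hilbert_hermitian (V : lmodType K) (ip : V -> V -> K) :
  is_hilbert cj ip -> hermitian ip.
Proof. by case. Qed.

Lemma hermitian_prod (H G : lmodType K) (ipH : H -> H -> K) (ipG : G -> G -> K) :
  hermitian ipH -> hermitian ipG -> hermitian (ip_prod ipH ipG).
Proof.
move=> [linH symH] [linG symG]; split=> [a x y z | x y]; rewrite /ip_prod /=.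
  by rewrite linH linG; ring.
by rewrite cjD -symH -symG.
Qed.

Section HermitianForm.
Variables (V : lmodType K) (ip : V -> V -> K).
Hypothesis hip : hermitian ip.

Lemma ipDl x y z : ip (x + y) z = ip x z + ip y z.
Proof. by have := hip.1 1 x y z; rewrite scale1r mul1r. Qed.

Lemma ip0l z : ip 0 z = 0.
Proof. by apply: (@addrI _ (ip 0 z)); rewrite -ipDl !addr0. Qed.

Lemma ipZl a x z : ip (a *: x) z = a * ip x z.
Proof. by have := hip.1 a x 0 z; rewrite !addr0 ip0l addr0. Qed.

Lemma ipNl x z : ip (- x) z = - ip x z.
Proof. by rewrite -scaleN1r ipZl mulN1r. Qed.

Lemma ipDr x y z : ip x (y + z) = ip x y + ip x z.
Proof. by rewrite hip.2 ipDl cjD -!hip.2. Qed.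

Lemma ipZr_real a x y : a \is Num.real -> ip x (a *: y) = a * ip x y.
Proof. by move=> a_real; rewrite hip.2 ipZl cjM cj_real // -hip.2. Qed.

Lemma ipNr x y : ip x (- y) = - ip x y.
Proof. by rewrite -scaleN1r ipZr_real ?mulN1r ?rpredN ?rpred1. Qed.

Lemma ipZ_real a x : a \is Num.real -> ip (a *: x) (a *: x) = a ^+ 2 * ip x x.
Proof. by move=> a_real; rewrite ipZl ipZr_real // mulrA -expr2. Qed.

Lemma ip_subZ x y t : t \is Num.real ->
  ip (x - t *: y) (x - t *: y) = ip x x - t * (ip x y + ip y x) + t ^+ 2 * ip y y.
Proof.
by move=> t_real; rewrite !(ipDl, ipDr, ipNl, ipNr) !(ipZl, ipZr_real) //; ring.
Qed.

End HermitianForm.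

Definition resolvent_condition (H G : lmodType K) (ipH : H -> H -> K)
    (ipG : G -> G -> K) (D : H -> Prop) (U : H -> G) : Prop :=
  [/\ trivial_kernel D U,
      (forall t, t \is Num.real -> t != 0 -> in_resolvent ipH ipG D U t)
    & (forall t R, t \is Num.real -> t != 0 -> is_resolvent ipH ipG D U t R ->
         forall v, ip_prod ipH ipG (R v) (R v) <= t ^-2 * ip_prod ipH ipG v v)].

Section UnitaryResolvent.
Variables (H G : lmodType K) (ipH : H -> H -> K) (ipG : G -> G -> K).
Hypotheses (hH : hermitian ipH) (hG : hermitian ipG).
Hypotheses (ipH_ge0 : forall x, 0 <= ipH x x) (ipG_ge0 : forall y, 0 <= ipG y y).
Variables (D : H -> Prop) (U : {linear H -> G}) (V : {linear G -> H}).
Hypothesis D_full : forall h, D h.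
Hypotheses (UK : cancel U V) (VK : cancel V U) (adjUV : is_adjoint ipH ipG U V).

Local Notation ip := (ip_prod ipH ipG).

Lemma unitary_trivial_kernel : trivial_kernel D U.
Proof. by move=> h _ Uh0; rewrite -(UK h) Uh0 -(linear0 U) UK. Qed.

Definition M_op (w : H * G) : H * G := (- V w.2, U w.1).

Lemma M_op_linear : linear M_op.
Proof. by move=> a [h k] [h' k']; rewrite /M_op /= !linearP. Qed.

HB.instance Definition _ :=
  GRing.isLinear.Build K (H * G)%type (H * G)%type *:%R M_op M_op_linear.

Lemma M_op_sqr w : M_op (M_op w) = - w.
Proof. by case: w => h k; rewrite /M_op /= linearN UK VK. Qed.

Lemma M_graphE w z : M_graph D U w z <-> z = M_op w.
Proof.
case: w => h k; rewrite /M_graph /=.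
split=> [[_ [g [_ -> ->]]] | ->]; first by rewrite /M_op /= UK.
by split=> //; exists (V k); rewrite VK.
Qed.

Lemma shift_graphE t w v :
  (exists z, M_graph D U w z /\ v = (z.1 - t *: w.1, z.2 - t *: w.2)) <->
  v = M_op w - t *: w.
Proof.
split=> [[z [/M_graphE -> ->]] // | ->].
by exists (M_op w); split=> //; apply/M_graphE.
Qed.

Lemma M_op_skew w w' : ip (M_op w) w' = - ip w (M_op w').
Proof.
case: w w' => h k [h' k']; rewrite /ip_prod /= !(ipNl hH, ipNr hH).
by rewrite adjUV hH.2 -adjUV -hG.2; ring.
Qed.

Lemma M_op_subZ_ip t w : t \is Num.real ->
  ip (M_op w - t *: w) (M_op w - t *: w) = (1 + t ^+ 2) * ip w w.
Proof.
move=> t_real; rewrite (ip_subZ (hermitian_prod hH hG)) //.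
rewrite (M_op_skew w (M_op w)) M_op_sqr (ipNr (hermitian_prod hH hG)) opprK.
by rewrite (M_op_skew w w) addNr mulr0 subr0 mulrDl mul1r.
Qed.

Lemma unitary_resolvent_bound t R : t \is Num.real -> t != 0 ->
  is_resolvent ipH ipG D U t R -> forall v, ip (R v) (R v) <= t ^-2 * ip v v.
Proof.
move=> t_real t_neq0 [_ R_inv] v.
have := (R_inv (R v) v).2 erefl; move: (R v) => w /shift_graphE ->.
rewrite M_op_subZ_ip // mulrA [_ * (1 + _)]mulrDr mulr1 mulVf ?expf_neq0 //.
by rewrite ler_peMl ?addr_ge0 // lerDr invr_ge0 -realEsqr.
Qed.

Lemma unitary_is_resolvent t : t \is Num.real ->
  is_resolvent ipH ipG D U t (cs_resolvent M_op t).
Proof.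
move=> t_real; pose R := cs_resolvent M_op t; split.
  split; first exact: cs_resolvent_linear.
  exists 1 => v; have v_eq : v = M_op (R v) - t *: R v.
    exact/esym/(cs_resolventKV M_op_sqr t_real).
  rewrite [in X in _ <= _ * X]v_eq M_op_subZ_ip // mul1r.
  by rewrite ler_peMl ?addr_ge0 // lerDl -realEsqr.
move=> w v; rewrite shift_graphE; split=> ->.
  exact/esym/(cs_resolventK M_op_sqr t_real).
exact/esym/(cs_resolventKV M_op_sqr t_real).
Qed.

End UnitaryResolvent.

Section ResolventRange.
Variables (H G : lmodType K) (ipH : H -> H -> K) (ipG : G -> G -> K).
Variables (D : H -> Prop) (U : H -> G).
Hypothesis U_lin : linear_on D U.

Lemma resolvent_shift_onto t R : is_resolvent ipH ipG D U t R ->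
  forall v, exists h g, [/\ D h, D g & v = (- g - t *: h, U h - t *: U g)].
Proof.
move=> [_ R_inv] v.
have [z [[Dh [g [Dg e2 z_eq]]] v_eq]] := (R_inv (R v) v).2 erefl.
by exists (R v).1, g; split; rewrite // {1}v_eq z_eq /= e2.
Qed.

Lemma resolvent_domain_full t R : trivial_kernel D U ->
  is_resolvent ipH ipG D U t R -> forall h, D h.
Proof.
move=> kerU /resolvent_shift_onto onto x.
have [h [g [Dh Dg [-> Uhg]]]] := onto (x, 0).
have [[D0 D_lin] U_linD] := U_lin.
have -> : h = t *: g.
  apply/eqP; rewrite -subr_eq0 addrC -scaleNr; apply/eqP/kerU; first exact: D_lin.
  by rewrite U_linD // scaleNr addrC Uhg.
have -> : - g - t *: (t *: g) = (- (1 + t ^+ 2)) *: g + 0.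
  by rewrite addr0 scalerA -expr2 scaleNr scalerDl scale1r opprD.
exact: D_lin _ _ _ Dg D0.
Qed.

Lemma resolvent_range_full t R : is_resolvent ipH ipG D U t R ->
  forall k, exists h, U h = k.
Proof.
move=> /resolvent_shift_onto onto k.
have [h [g [Dh Dg [_ ->]]]] := onto (0, k).
by exists ((- t) *: g + h); rewrite U_lin.2 // scaleNr addrC.
Qed.

End ResolventRange.

Section Isometry.
Variables (H G : lmodType K) (ipH : H -> H -> K) (ipG : G -> G -> K).
Hypotheses (hH : hermitian ipH) (hG : hermitian ipG).
Hypotheses (ipH_ge0 : forall x, 0 <= ipH x x) (ipG_ge0 : forall y, 0 <= ipG y y).
Variables (D : H -> Prop) (U : H -> G).
Hypothesis D_full : forall h, D h.

Lemma resolvent_bound_isometry :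
  (forall t, t \is Num.real -> t != 0 -> in_resolvent ipH ipG D U t) ->
  (forall t R, t \is Num.real -> t != 0 -> is_resolvent ipH ipG D U t R ->
     forall v, ip_prod ipH ipG (R v) (R v) <= t ^-2 * ip_prod ipH ipG v v) ->
  forall x, ipG (U x) (U x) = ipH x x.
Proof.
move=> resU boundU x; set a := ipH x x; set b := ipG (U x) (U x).
have a_real : a \is Num.real := ger0_real (ipH_ge0 x).
have b_real : b \is Num.real := ger0_real (ipG_ge0 (U x)).
suff : 2 * (a - b) = 0 by move/eqP; rewrite mulf_eq0 pnatr_eq0 subr_eq0 => /eqP.
apply: (@affine_ge0_slope_eq0 _ (a + b)).
- exact: rpredD.
- by rewrite rpredM ?rpredB ?realn.
move=> t t_real t_neq0; have [R hR] := resU t t_real t_neq0.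
(* v = (M - t) (x, U x); the resolvent bound at v is the affine inequality. *)
pose v := ((- (1 + t)) *: x, (1 - t) *: U x).
have Rv : R v = (x, U x).
  apply/esym/hR.2; exists (- x, U x); split; first by split=> //; exists x.
  by rewrite /v /= scalerBl scaleNr scalerDl !scale1r opprD.
have := boundU t R t_real t_neq0 hR v; rewrite Rv /ip_prod /=.
rewrite (ipZ_real hH) ?(ipZ_real hG) ?rpredB ?rpredN ?rpredD ?rpred1 //.
have t2_gt0 : 0 < t ^+ 2 by rewrite lt_def expf_neq0 // -realEsqr.
rewrite ler_pdivlMl // -subr_ge0 -/a -/b.
suff -> : (- (1 + t)) ^+ 2 * a + (1 - t) ^+ 2 * b - t ^+ 2 * (a + b) =
          a + b + t * (2 * (a - b)) by [].
by ring.
Qed.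

Lemma isometry_polarization (f : {linear H -> G}) :
  (forall x, ipG (f x) (f x) = ipH x x) -> forall x y, ipG (f x) (f y) = ipH x y.
Proof.
move=> f_iso x y; apply: cj_sep => a.
rewrite -(ipZl hG) -(ipZl hH) -linearZ -hG.2 -hH.2.
have := f_iso (a *: x + y).
rewrite linearD !(ipDl hG, ipDr hG, ipDl hH, ipDr hH) !f_iso.
by rewrite -!addrA => /addrI; rewrite !addrA => /addIr.
Qed.

Lemma isometric_onto_unitary (f : {linear H -> G}) :
  (forall x y, ipG (f x) (f y) = ipH x y) -> trivial_kernel D f ->
  (forall k, exists h, f h = k) -> unitary ipH ipG D f.
Proof.
move=> f_iso kerf f_onto.
have f_inj : injective f.
  move=> x y fxy; apply/eqP; rewrite -subr_eq0; apply/eqP/kerf => //.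
  by rewrite linearB fxy subrr.
pose g k := sval (boolp.cid (f_onto k)).
have gK : cancel g f := fun k => svalP (boolp.cid (f_onto k)).
split=> //; split.
  by split=> [a x y | ]; [exact: linearP | exists 1 => x; rewrite f_iso mul1r].
exists g; split=> //; first by move=> h; apply: f_inj; rewrite gK.
by move=> h k; rewrite -{1}(gK k) f_iso.
Qed.

End Isometry.

Section Characterization.
Variables (H G : lmodType K) (ipH : H -> H -> K) (ipG : G -> G -> K).
Hypotheses (hH : hermitian ipH) (hG : hermitian ipG).
Hypotheses (ipH_ge0 : forall x, 0 <= ipH x x) (ipG_ge0 : forall y, 0 <= ipG y y).
Variables (D : H -> Prop) (U : H -> G).

Lemma unitary_resolvent_condition :
  unitary ipH ipG D U -> resolvent_condition ipH ipG D U.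
Proof.
case=> D_full [[U_lin _] [V [UK VK adjUV]]].
pose UL : {linear H -> G} := HB.pack U (GRing.isLinear.Build _ _ _ _ U U_lin).
pose VL : {linear G -> H} :=
  HB.pack V (GRing.isLinear.Build _ _ _ _ V (linear_inverse U_lin UK VK)).
split.
- exact: (@unitary_trivial_kernel _ _ D UL VL).
- move=> t t_real _; eexists.
  exact: (@unitary_is_resolvent _ _ _ _ hH hG ipH_ge0 ipG_ge0 D UL VL).
- move=> t R t_real t_neq0.
  exact: (@unitary_resolvent_bound _ _ _ _ hH hG ipH_ge0 ipG_ge0 D UL VL).
Qed.

Lemma resolvent_condition_unitary : linear_on D U ->
  resolvent_condition ipH ipG D U -> unitary ipH ipG D U.
Proof.
move=> U_linD [kerU resU boundU].
have [R1 hR1] := resU 1 (rpred1 _) (oner_neq0 _).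
have D_full := resolvent_domain_full U_linD kerU hR1.
pose UL : {linear H -> G} := HB.pack U
  (GRing.isLinear.Build _ _ _ _ U (fun a x y => U_linD.2 a x y (D_full x) (D_full y))).
apply: (@isometric_onto_unitary _ _ _ _ D D_full UL) => //.
  apply: isometry_polarization => //.
  exact: (resolvent_bound_isometry hH hG ipH_ge0 ipG_ge0 D_full resU boundU).
by move=> k; have [h Uh] := resolvent_range_full U_linD hR1 k; exists h.
Qed.

End Characterization.
End Conjugation.

Lemma sconjD (R : realType) (b : bool) : {morph @sconj R b : x y / x + y}.
Proof. by case: b => x y //=; rewrite rmorphD. Qed.

Lemma sconjM (R : realType) (b : bool) : {morph @sconj R b : x y / x * y}.
Proof. by case: b => x y //=; rewrite rmorphM. Qed.

Lemma sconj_real (R : realType) (b : bool) (x : scal R b) :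
  x \is Num.real -> sconj x = x.
Proof. by case: b x => //= x /complex_realP [r ->]; rewrite conjc_real. Qed.

Lemma sconj_sep (R : realType) (b : bool) (p q : scal R b) :
  (forall a, a * p + sconj (a * p) = a * q + sconj (a * q)) -> p = q.
Proof.
case: b p q => /= p q pq; last by move: (pq 1); rewrite !mul1r => /double_inj.
move: (pq 1) (pq 'i%C); rewrite !mul1r.
case: p q {pq} => [x y] [x' y']; simpc => -[/double_inj ->].
by rewrite -!opprD => -[/oppr_inj/double_inj ->].
Qed.

Theorem corollary4p4 (R : realType) (b : bool)
    (H G : lmodType (scal R b))
    (ipH : H -> H -> scal R b) (ipG : G -> G -> scal R b)
    (hH : is_hilbert (@sconj R b) ipH) (hG : is_hilbert (@sconj R b) ipG)
    (D : H -> Prop) (U : H -> G) (hU : linear_on D U) :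
  unitary ipH ipG D U <->
  [/\ trivial_kernel D U,
      (forall t : scal R b, t \is Num.real -> t != 0 -> in_resolvent ipH ipG D U t)
    & (forall (t : scal R b) (Rt : H * G -> H * G),
         t \is Num.real -> t != 0 -> is_resolvent ipH ipG D U t Rt ->
         forall v : H * G,
           ip_prod ipH ipG (Rt v) (Rt v) <= t ^-2 * ip_prod ipH ipG v v)].
Proof.
have cjD := @sconjD R b; have cjM := @sconjM R b; have cj_real := @sconj_real R b.
have [[_ _ ipH_ge0 _ _] [_ _ ipG_ge0 _ _]] := (hH, hG).
have [hipH hipG] := (hilbert_hermitian hH, hilbert_hermitian hG).
split.
  exact: (unitary_resolvent_condition cjD cjM cj_real hipH hipG ipH_ge0 ipG_ge0).
exact: (resolvent_condition_unitary cjD cjM cj_real (@sconj_sep R b)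
          hipH hipG ipH_ge0 ipG_ge0 hU).
Qed.
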